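(* Let $R\subseteq S_n$ be a top-$k$ partial ranking, $\sigma\in R$ and $\tau\in S_n$. Then $d(\sigma,\tau)=d(\sigma,\Pi_R(\tau))+d(\Pi_R(\tau),\tau)$.
   Context: $S_n$ is the symmetric group on $[n]$; $\sigma\in S_n$ is identified with the full ranking $\sigma(1)\succ\cdots\succ\sigma(n)$. For distinct items $x,y$, $\{x,y\}$ is discordant for $\sigma,\tau$ if $(\sigma^{-1}(x)-\sigma^{-1}(y))(\tau^{-1}(x)-\tau^{-1}(y))<0$. The Kendall distance $d(\sigma,\tau)$ is the number of unordered discordant pairs. For $0\le k\le n$ and distinct $a_1,\dots,a_k\in[n]$, the top-$k$ partial ranking is the set $R=\{\sigma\in S_n:\sigma(i)=a_i,\ i\le k\}$. For $\tau\in S_n$, $\Pi_R(\tau)$ denotes the unique element of $R$ minimising $\rho\mapsto d(\rho,\tau)$ over $\rho\in R$ (this minimiser exists and is unique). *)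

(* Items and positions are 'I_n (0-based: position i of the
   paper corresponds to i.-1 here). A ranking sigma : {perm 'I_n} maps a
   position to the item at that position; (sigma^-1) x is the position of x. *)
From mathcomp Require Import all_boot all_order all_fingroup.
Set Implicit Arguments. Unset Strict Implicit. Unset Printing Implicit Defensive.

Local Open Scope group_scope.

Definition discordant n (s t : {perm 'I_n}) (x y : 'I_n) : bool :=
  (x != y) && ((s^-1 x < s^-1 y)%N != (t^-1 x < t^-1 y)%N).

Definition kendall n (s t : {perm 'I_n}) : nat :=
  #|[set p : 'I_n * 'I_n | (p.1 < p.2)%N && discordant s t p.1 p.2]|.

Definition topk n k (a : 'I_k -> 'I_n) : {set {perm 'I_n}} :=
  [set s : {perm 'I_n} |
     [forall i : 'I_n, forall j : 'I_k, (val i == val j) ==> (s i == a j)]].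

Definition is_proj n (R : {set {perm 'I_n}}) (tau rho : {perm 'I_n}) : Prop :=
  rho \in R /\ forall rho', rho' \in R -> (kendall rho tau <= kendall rho' tau)%N.

(* A discordance between sigma and rho, both in R, only involves items that
   rho places in the free positions (>= k).  The projection rho is concordant
   with tau on every pair of free items: otherwise two adjacent free positions
   of rho are in the wrong order for tau, and swapping them stays in R and
   lowers the distance to tau.  Hence every pair discordant for sigma, tau is
   discordant for exactly one of (sigma, rho) and (rho, tau), and the Kendall
   distances add up. *)
From mathcomp Require Import all_boot all_order all_fingroup.
From mathcomp Require Import zify.
Set Implicit Arguments. Unset Strict Implicit. Unset Printing Implicit Defensive.
Local Open Scope group_scope.

Section Kendall.
Variable n : nat.
Implicit Types (s r t : {perm 'I_n}) (x y : 'I_n).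

Lemma discordant_sym s t x y : discordant s t x y = discordant s t y x.
Proof.
rewrite /discordant eq_sym; have [//|nxy] /= := eqVneq y x.
have flip (p : {perm 'I_n}) : (p^-1 x < p^-1 y)%N = ~~ (p^-1 y < p^-1 x)%N.
  by rewrite -leqNgt ltn_neqAle (inj_eq val_inj) (inj_eq (@perm_inj _ _)) eq_sym nxy.
by rewrite (flip s) (flip t); do 2 case: (_ < _)%N.
Qed.

Lemma discordant_addb s r t x y :
  discordant s t x y = (x != y) && (discordant s r x y (+) discordant r t x y).
Proof. by rewrite /discordant; case: (x != y); do 3 case: (_ < _)%N. Qed.

Lemma kendall_gt0 s t x y : discordant s t x y -> (0 < kendall s t)%N.
Proof.
wlog lt_xy : x y / (x < y)%N => [wlog_lt D|D].
  have /andP[nxy _] := D; case: (ltngtP x y) => [lt|lt|/val_inj exy].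
  - exact: wlog_lt D.
  - by apply: (wlog_lt y x) => //; rewrite discordant_sym.
  - by rewrite exy eqxx in nxy.
by apply/card_gt0P; exists (x, y); rewrite inE lt_xy.
Qed.

Lemma kendall_add s r t :
  (forall x y, ~~ (discordant s r x y && discordant r t x y)) ->
  kendall s t = (kendall s r + kendall r t)%N.
Proof.
move=> disjoint; rewrite /kendall -cardsUI.
set A := [set p | _ & discordant s r _ _]; set B := [set p | _ & discordant r t _ _].
have -> : A :&: B = set0.
  apply/setP => p; rewrite !inE andbACA andbb.
  by rewrite (negbTE (disjoint p.1 p.2)) andbF.
rewrite cards0 addn0; apply: eq_card => p; rewrite !inE -andb_orr.
rewrite (discordant_addb _ r) -(inj_eq val_inj) neq_ltn.
have := disjoint p.1 p.2; case: (p.1 < p.2)%N => //=.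
by case: (discordant s r _ _); case: (discordant r t _ _); rewrite ?andbF.
Qed.

Lemma ltn_tperm_adjacent (i j p q : 'I_n) : val j = i.+1 -> p != q ->
  ~~ ((p == i) && (q == j) || (p == j) && (q == i)) ->
  (tperm i j p < tperm i j q)%N = (p < q)%N.
Proof.
rewrite !permE /= -!(inj_eq val_inj) /=.
by repeat case: eqP => /=; lia.
Qed.

Lemma discordant_tperm_adjacent r (i j : 'I_n) x y : val j = i.+1 ->
  discordant r (tperm i j * r) x y ->
  (r^-1 x == i) && (r^-1 y == j) || (r^-1 x == j) && (r^-1 y == i).
Proof.
move=> eij /andP[nxy]; rewrite invMg tpermV !permM; apply: contraNT => not_ij.
by rewrite ltn_tperm_adjacent // (inj_eq (@perm_inj _ _)).
Qed.

Lemma kendall_tperm_adjacent r t (i j : 'I_n) : val j = i.+1 ->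
  (t^-1 (r j) < t^-1 (r i))%N -> (kendall (tperm i j * r) t < kendall r t)%N.
Proof.
move=> eij t_ji; set r' := tperm i j * r.
have r'V w : r'^-1 w = tperm i j (r^-1 w) by rewrite invMg tpermV permM.
have nij : i != j by rewrite -(inj_eq val_inj) eij neq_ltn ltnSn.
have D : discordant r r' (r i) (r j).
  rewrite /discordant (inj_eq (@perm_inj _ _)) nij !r'V !permK tpermL tpermR eij.
  by rewrite ltnSn [(_ < i)%N]ltnNge leqnSn.
have C : ~~ discordant r' t (r i) (r j).
  rewrite /discordant !r'V !permK tpermL tpermR eij.
  by rewrite [(_ < i)%N]ltnNge leqnSn ltnNge (ltnW t_ji) andbF.
rewrite (@kendall_add r r' t); last first.
  move=> x y; apply/negP => /andP[/(discordant_tperm_adjacent eij) xy].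
  rewrite -(permKV r x) -(permKV r y).
  case/orP: xy => /andP[/eqP-> /eqP->]; first by rewrite (negbTE C).
  by rewrite discordant_sym (negbTE C).
by rewrite -[X in (X < _)%N]add0n ltn_add2r (kendall_gt0 D).
Qed.

End Kendall.

Section TopK.
Variables (n k : nat) (a : 'I_k -> 'I_n).
Implicit Types (s r : {perm 'I_n}) (x y : 'I_n).

Lemma topkP s :
  reflect (forall (i : 'I_n) (j : 'I_k), val i = val j -> s i = a j) (s \in topk a).
Proof.
rewrite inE; apply: (iffP forallP) => [sa i j eij | sa i].
  by apply/eqP; move/forallP/(_ j)/implyP: (sa i); apply; apply/eqP.
by apply/forallP => j; apply/implyP => /eqP/sa ->.
Qed.

Lemma topk_invE s r x : s \in topk a -> r \in topk a ->
  (r^-1 x < k)%N -> s^-1 x = r^-1 x.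
Proof.
move=> /topkP sa /topkP ra lt_k; apply: (canLR (permK s)).
by rewrite (sa _ (Ordinal lt_k)) // -(ra (r^-1 x) (Ordinal lt_k)) ?permKV.
Qed.

Lemma topk_discordant_free s r x y : s \in topk a -> r \in topk a ->
  discordant s r x y -> (k <= r^-1 x)%N.
Proof.
move=> sR rR /andP[nxy]; apply: contraTT; rewrite -ltnNge => x_top.
rewrite (topk_invE sR rR x_top).
have [y_top|y_free] := ltnP (r^-1 y) k; first by rewrite (topk_invE sR rR y_top) eqxx.
have s_y_free : (k <= s^-1 y)%N.
  by rewrite leqNgt; apply: contraTN y_free => y_top; rewrite -ltnNge (topk_invE rR sR).
by rewrite (leq_trans x_top s_y_free) (leq_trans x_top y_free).
Qed.

Lemma topk_tperm r (i j : 'I_n) : r \in topk a -> (k <= i)%N -> (k <= j)%N ->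
  tperm i j * r \in topk a.
Proof.
move=> /topkP ra ki kj; apply/topkP => p q epq; rewrite permM tpermD ?(ra _ q) //.
  by apply: contraTneq ki => ->; rewrite -ltnNge epq ltn_ord.
by apply: contraTneq kj => ->; rewrite -ltnNge epq ltn_ord.
Qed.

Lemma proj_adjacent_ordered tau r (i j : 'I_n) : is_proj (topk a) tau r ->
  (k <= i)%N -> val j = i.+1 -> (tau^-1 (r i) < tau^-1 (r j))%N.
Proof.
move=> [rR r_min] ki eij.
have [//|ji|/val_inj/perm_inj/perm_inj eq_ij] := ltngtP.
  have kj : (k <= j)%N by rewrite eij leqW.
  have := r_min _ (topk_tperm rR ki kj).
  by rewrite leqNgt (kendall_tperm_adjacent eij ji).
by move/eqP: eij; rewrite eq_ij eqn_leq ltnn andbF.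
Qed.

Lemma proj_free_concordant tau r x y : is_proj (topk a) tau r ->
  (k <= r^-1 x)%N -> (k <= r^-1 y)%N -> ~~ discordant r tau x y.
Proof.
move=> r_proj kx ky.
(* [f p] is the tau-position of the item at position [p] of r; [insubd] only
   serves to read [p : nat] as an ordinal, with a junk default outside 'I_n. *)
pose f p := val (tau^-1 (r (insubd (r^-1 x) p))).
have fE (w : 'I_n) : f w = tau^-1 (r w) by rewrite /f valKd.
have f_mono : {in [pred p | k <= p < n] &, {homo f : p q / p < q}}.
  apply: homo_ltn_in => [y' x' z'|p q|p]; first exact: ltn_trans.
    move=> /andP[kp _] /andP[_ qn] u /andP[pu uq].
    by rewrite inE (leq_trans kp (ltnW pu)) (ltn_trans uq qn).
  move=> /andP[kp pn] /andP[_ p1n].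
  have := @proj_adjacent_ordered tau r (Ordinal pn) (Ordinal p1n) r_proj kp erefl.
  by rewrite -!fE.
have ordered u v : (k <= r^-1 u)%N -> (k <= r^-1 v)%N ->
    (r^-1 u < r^-1 v)%N -> (tau^-1 u < tau^-1 v)%N.
  move=> ku kv lt_uv; have := f_mono (r^-1 u) (r^-1 v); rewrite !fE !permKV.
  by apply=> //; apply/andP.
rewrite /discordant; have [lt|gt|/val_inj/perm_inj->] := ltngtP (r^-1 x) (r^-1 y).
- by rewrite (ordered x y kx ky lt) andbF.
- by rewrite ltnNge (ltnW (ordered y x ky kx gt)) andbF.
- by rewrite eqxx.
Qed.

End TopK.

Theorem lemma5 (n k : nat) (a : 'I_k -> 'I_n) (Ha : injective a)
  (sigma tau rho : {perm 'I_n}) :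
  sigma \in topk a -> is_proj (topk a) tau rho ->
  kendall sigma tau = (kendall sigma rho + kendall rho tau)%N.
Proof.
move=> sigmaR rho_proj; have [rhoR _] := rho_proj.
apply: kendall_add => x y; apply/negP => /andP[D_sigma_rho D_rho_tau].
have kx := topk_discordant_free sigmaR rhoR D_sigma_rho.
rewrite discordant_sym in D_sigma_rho.
have ky := topk_discordant_free sigmaR rhoR D_sigma_rho.
by rewrite (negbTE (proj_free_concordant rho_proj kx ky)) in D_rho_tau.
Qed.
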